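(* Let $N,M,r$ be positive integers and let $\xi^{1},\dots,\xi^{M}\in\{-1,+1\}^{N}$ be memory-vectors such that the Hamming distance between any two distinct memory-vectors is at least $\tau N$ for some $\tau>0$. Let $0<\rho<\frac{\tau}{2}$ and suppose $$M\le \exp\big(2N(\tau-2\rho)\big)\,\frac{1-e^{-2}}{2e^{2}}.$$ Let $E_{\mathrm{rand}}$ be the compact associative memory energy defined in the context (built from $r$ i.i.d. Gaussian random features $\omega_1,\dots,\omega_r\sim\mathcal N(0,\mathbf I_N)$ via the map $\phi_{F++}$ with any parameter $s\in(0,1)$). Then for every $l\in\{1,\dots,M\}$, every input $\widehat{\xi}^{l}\in\{-1,+1\}^N$ at Hamming distance at most $\rho N$ from $\xi^{l}$, and every coordinate $i\in\{1,\dots,N\}$, letting $\tilde{\xi}^{l}$ denote $\widehat{\xi}^{l}$ with its $i$-th coordinate negated and $\Delta(E_{\mathrm{rand}})=E_{\mathrm{rand}}(\tilde{\xi}^{l};\xi^1,\dots,\xi^M)-E_{\mathrm{rand}}(\widehat{\xi}^{l};\xi^1,\dots,\xi^M)$, the following holds: if $\widehat{\xi}^{l}_i=\xi^{l}_i$ (so the flip increases the Hamming distance to $\xi^l$) then $\mathbb{E}[\Delta(E_{\mathrm{rand}})]>0$, and if $\widehat{\xi}^{l}_i=-\xi^{l}_i$ (so the flip decreases the distance to $\xi^l$) then $\mathbb{E}[\Delta(E_{\mathrm{rand}})]<0$, where the expectation is over $\omega_1,\dots,\omega_r$.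
   Context: FAVOR++ random features: fix a parameter $s\in(0,1)$ and set $A=1-\frac{1}{s}$, $\widehat A=-A>0$, $B=\sqrt{1+4\widehat A}$, $C=-\frac12$, $D=(1+4\widehat A)^{N/4}$. For i.i.d. $\omega_1,\dots,\omega_r\sim\mathcal N(0,\mathbf I_N)$ define $\phi_{F++}:\mathbb R^N\to\mathbb R^r$ by $$\phi_{F++}(\mathbf z)=\frac{D}{\sqrt r}\Big(\exp\big(-\widehat A\|\omega_k\|_2^2+B\,\omega_k^\top\mathbf z+C\|\mathbf z\|_2^2\big)\Big)_{k=1}^{r}.$$ (This gives an unbiased estimator of the softmax kernel: $\mathbb E[\phi_{F++}(\mathbf x)^\top\phi_{F++}(\mathbf y)]=\exp(\mathbf x^\top\mathbf y)$.) The compact associative memory energy of an input $\xi\in\{-1,+1\}^N$ given memories $\xi^1,\dots,\xi^M$ is $$E_{\mathrm{rand}}(\xi;\xi^1,\dots,\xi^M)=\phi_{F++}(\xi)^\top\mathbf M,\qquad \mathbf M=-\sum_{\mu=1}^{M}\phi_{F++}(\xi^{\mu}),$$ with the same random vectors $\omega_k$ used throughout. *)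

From HB Require Import structures.
From mathcomp Require Import all_boot all_order all_algebra.
From mathcomp Require Import all_classical all_reals all_analysis.
Set Implicit Arguments. Unset Strict Implicit. Unset Printing Implicit Defensive.
Import Order.TTheory GRing.Theory Num.Theory.
Local Open Scope ring_scope.

Section defs.
Context {R : realType}.

Definition scons (x : R) (g : nat -> R) : nat -> R :=
  fun i => if i is i'.+1 then g i' else x.

(* Expectation of f(g_0,...,g_{n-1}) where g_0,...,g_{n-1} are i.i.d. N(0,1)
   (the coordinates g_i, i >= n, are irrelevant and set to 0).  Computed as the
   iterated integral against the standard normal probability measure
   [normal_prob 0 1] of MathComp-Analysis (= integral w.r.t. the product
   Gaussian measure, by Fubini, for integrable f). *)
Fixpoint gauss_expect (n : nat) (f : (nat -> R) -> R) : R :=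
  match n with
  | 0 => f (fun _ => 0)
  | n'.+1 => Rintegral (normal_prob (0:R) 1) setT
               (fun x => gauss_expect n' (fun g => f (scons x g)))
  end.

Definition omega_expect (N r : nat) (F : ('I_r -> 'I_N -> R) -> R) : R :=
  gauss_expect (r * N) (fun g => F (fun k j => g (k * N + j)%N)).

Definition dotv (N : nat) (x y : 'I_N -> R) : R := \sum_(j < N) x j * y j.
Definition sqnorm (N : nat) (x : 'I_N -> R) : R := dotv x x.

Definition Ahat (s : R) : R := 1 / s - 1.   (* = - A, A = 1 - 1/s *)
Definition Bpp (s : R) : R := Num.sqrt (1 + 4 * Ahat s).
Definition Cpp : R := - (1 / 2).
Definition Dpp (N : nat) (s : R) : R := powR (1 + 4 * Ahat s) (N%:R / 4).

Definition phiFpp (N r : nat) (s : R) (omega : 'I_r -> 'I_N -> R)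
  (z : 'I_N -> R) : 'I_r -> R :=
  fun k => Dpp N s / Num.sqrt r%:R *
    expR (- Ahat s * sqnorm (omega k) + Bpp s * dotv (omega k) z
          + Cpp * sqnorm z).

Definition E_rand (N r M : nat) (s : R) (omega : 'I_r -> 'I_N -> R)
  (mem : 'I_M -> 'I_N -> R) (xi : 'I_N -> R) : R :=
  \sum_(k < r) phiFpp s omega xi k *
     (- \sum_(mu < M) phiFpp s omega (mem mu) k).

Definition is_spin (N : nat) (x : 'I_N -> R) : Prop :=
  forall j, x j = 1 \/ x j = -1.

Definition hamming (N : nat) (x y : 'I_N -> R) : nat :=
  #|[set j : 'I_N | x j != y j]|.

Definition flip (N : nat) (x : 'I_N -> R) (i : 'I_N) : 'I_N -> R :=
  fun j => if j == i then - x j else x j.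

End defs.

From HB Require Import structures.
From mathcomp Require Import all_boot all_order all_algebra.
From mathcomp Require Import all_classical all_reals all_analysis.
From mathcomp Require Import measurable_realfun ring lra.
Import Order.TTheory GRing.Theory Num.Theory.
Local Open Scope ring_scope.

(* FAVOR++ features are unbiased for the softmax kernel: after expanding
   phi(x)_k phi(y)_k, each Gaussian coordinate contributes a one-dimensional
   integral E[exp(a g^2 + b g)] = exp(b^2 / (2 (1 - 2a))) / sqrt(1 - 2a), and
   the product of these is exp(x.y) / r.  Hence the expected energy is the dense
   associative memory energy -sum_mu exp(<xi, xi^mu>), and flipping coordinate i
   changes it by sum_mu (exp d_mu - exp (d_mu - 2 s_mu)), where
   d_mu = <xihat, xi^mu> and s_mu = xihat_i xi^mu_i = +-1.  The term mu = l has
   the sign of s_l and modulus at least e^(N (1 - 2 rho)) (1 - e^-2); by the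
   separation of the memories every other term has modulus at most
   e^(N (1 - 2 (tau - rho))) (e^2 - 1), and the bound on M makes the l-th term
   dominate the sum. *)

Lemma big_ord_muln (T : Type) (idx : T) (op : Monoid.law idx) (r N : nat)
    (F : nat -> T) :
  \big[op/idx]_(m < r * N) F m =
  \big[op/idx]_(k < r) \big[op/idx]_(j < N) F (k * N + j)%N.
Proof.
elim: r => [|r IHr]; first by rewrite mul0n !big_ord0.
by rewrite mulSnr big_split_ord IHr big_ord_recr.
Qed.

Lemma big_pairE (T : Type) (idx : T) (op : Monoid.com_law idx) (I J : finType)
    (F : I * J -> T) :
  \big[op/idx]_(p : I * J) F p = \big[op/idx]_i \big[op/idx]_j F (i, j).
Proof. by rewrite pair_bigA; apply: eq_bigr => -[]. Qed.

Lemma Rintegral_sum d (T : measurableType d) (R : realType)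
    (mu : {measure set T -> \bar R}) (D : set T) (I : finType) (f : I -> T -> R) :
  measurable D -> (forall i, mu.-integrable D (EFin \o f i)) ->
  Rintegral mu D (fun x => \sum_i f i x) = \sum_i Rintegral mu D (f i).
Proof.
move=> mD intf; rewrite /Rintegral.
under eq_integral do rewrite -sumEFin.
rewrite integral_sum // sum_fine // => i _.
exact: (integrable_fin_num _ (intf i)).
Qed.

Section gaussian_expquad.
Context {R : realType}.
Local Open Scope classical_set_scope.
Local Notation nu := (normal_prob (0:R) 1).

Definition expquad_mean (a b : R) : R :=
  expR (b ^+ 2 / (2 * (1 - 2 * a))) / Num.sqrt (1 - 2 * a).

Lemma expquad_mean00 : expquad_mean 0 0 = 1.
Proof. by rewrite /expquad_mean expr0n /= mul0r mulr0 subr0 sqrtr1 expR0 divr1. Qed.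

Lemma expR_quad_normal_pdf (a b x : R) : a <= 0 ->
  expR (a * x ^+ 2 + b * x) * normal_pdf 0 1 x =
  expquad_mean a b * normal_pdf (b / (1 - 2 * a)) (Num.sqrt (1 - 2 * a))^-1 x.
Proof.
move=> a_le0; set p := 1 - 2 * a.
have p_gt0 : 0 < p by rewrite /p; lra.
have sqrtp_neq0 : Num.sqrt p != 0 by rewrite gt_eqF // sqrtr_gt0.
have peak : normal_peak (Num.sqrt p)^-1 = Num.sqrt p * normal_peak 1.
  rewrite /normal_peak exprVn sqr_sqrtr ?ltW // expr1n mul1r -!mulrnAr.
  by rewrite sqrtrM ?invr_ge0 ?ltW // sqrtrV ?ltW // invfM invrK.
rewrite !normal_pdfE ?oner_neq0 ?invr_neq0 // peak /expquad_mean /normal_fun.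
rewrite -/p exprVn sqr_sqrtr ?ltW // expr1n.
transitivity (normal_peak 1 *
  (expR (b ^+ 2 / (2 * p)) * expR (- (x - b / p) ^+ 2 / (p^-1 *+ 2)))); last by field.
rewrite mulrCA -!expRD; congr (_ * expR _); rewrite /p; field.
by rewrite -/p gt_eqF.
Qed.

Lemma ge0_integral_normal_prob (m sigma : R) (f : R -> \bar R) :
  (forall x, 0 <= f x)%E -> measurable_fun setT f ->
  (\int[normal_prob m sigma]_x f x =
   \int[lebesgue_measure]_x (f x * (normal_pdf m sigma x)%:E))%E.
Proof.
move=> f_ge0 mf; have nu_ac := normal_prob_dominates m sigma.
rewrite -(Radon_Nikodym_SigmaFinite.change_of_variables nu_ac) //.
apply: ae_eq_integral => //.
- apply: emeasurable_funM => //; apply: measurable_int.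
  exact: Radon_Nikodym_SigmaFinite.f_integrable.
- by apply: emeasurable_funM => //; apply/measurable_EFinP; exact: measurable_normal_pdf.
- apply: ae_eqe_mul2l; apply: integral_ae_eq => //.
  + exact: Radon_Nikodym_SigmaFinite.f_integrable.
  + by apply/measurable_EFinP; exact: measurable_normal_pdf.
  + by move=> E _ mE; rewrite -Radon_Nikodym_SigmaFinite.f_integral.
Qed.

Lemma measurable_expR_quad (a b : R) :
  measurable_fun setT (fun x : R => expR (a * x ^+ 2 + b * x)).
Proof.
apply: measurableT_comp => //.
by apply: measurable_funD; apply: measurable_funM => //; exact: measurable_fun_pow.
Qed.

Lemma integral_expR_quad (a b : R) : a <= 0 ->
  (\int[nu]_x (expR (a * x ^+ 2 + b * x))%:E = (expquad_mean a b)%:E)%E.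
Proof.
move=> a_le0.
rewrite ge0_integral_normal_prob; last 2 first.
- by move=> x; rewrite lee_fin expR_ge0.
- by apply/measurable_EFinP; exact: measurable_expR_quad.
under eq_integral do rewrite -EFinM expR_quad_normal_pdf // EFinM.
rewrite integralZl //; last exact: integrable_normal_pdf.
by rewrite integral_normal_pdf mule1.
Qed.

Lemma integrable_expR_quad (a b : R) : a <= 0 ->
  nu.-integrable setT (EFin \o (fun x => expR (a * x ^+ 2 + b * x))).
Proof.
move=> a_le0; apply/integrableP; split.
  by apply/measurable_EFinP; exact: measurable_expR_quad.
under eq_integral do rewrite /= ger0_norm ?expR_ge0 //.
by rewrite integral_expR_quad // ltry.
Qed.

Lemma Rintegral_expR_quad (a b : R) : a <= 0 ->
  Rintegral nu setT (fun x => expR (a * x ^+ 2 + b * x)) = expquad_mean a b.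
Proof. by move=> a_le0; rewrite /Rintegral integral_expR_quad. Qed.

Lemma integrable_scaled_expR_quad (k a b : R) : a <= 0 ->
  nu.-integrable setT (EFin \o (fun x => k * expR (a * x ^+ 2 + b * x))).
Proof.
move=> a_le0; apply: (@eq_integrable _ _ _ nu setT _
  (fun x => k%:E * (EFin \o (fun x => expR (a * x ^+ 2 + b * x))) x)%E) => //.
by apply: integrableZl => //; exact: integrable_expR_quad.
Qed.

(* [gauss_expect] is an iterated integral with no linearity theory of its own,
   so the whole family of Gaussian exponentials is integrated one coordinate
   at a time. *)
Lemma gauss_expect_sum_expR_quad n (I : finType) (c : I -> R) (a b : I -> nat -> R) :
  (forall t m, a t m <= 0) ->
  gauss_expect n (fun g =>
    \sum_t c t * expR (\sum_(m < n) (a t m * g m ^+ 2 + b t m * g m))) =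
  \sum_t c t * \prod_(m < n) expquad_mean (a t m) (b t m).
Proof.
elim: n c a b => [|n IHn] c a b a_le0.
  by apply: eq_bigr => t _; rewrite !big_ord0 expR0.
pose c' t := c t * \prod_(m < n) expquad_mean (a t m.+1) (b t m.+1).
have inner x : gauss_expect n (fun g => \sum_t c t *
      expR (\sum_(m < n.+1) (a t m * scons x g m ^+ 2 + b t m * scons x g m))) =
    \sum_t c' t * expR (a t 0 * x ^+ 2 + b t 0 * x).
  under eq_bigr do rewrite /c' mulrAC.
  rewrite -(IHn _ (fun t m => a t m.+1) (fun t m => b t m.+1)) => [|t m].
    congr (gauss_expect n _); apply: funext => g.
    by apply: eq_bigr => t _; rewrite big_ord_recl expRD mulrA.
  exact: a_le0.
transitivity (Rintegral nu setT
    (fun x => \sum_t c' t * expR (a t 0 * x ^+ 2 + b t 0 * x))).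
  by apply: eq_Rintegral => x _; exact: inner.
rewrite Rintegral_sum //; last by move=> t; exact: integrable_scaled_expR_quad.
apply: eq_bigr => t _.
rewrite RintegralZl //; last exact: integrable_expR_quad.
by rewrite Rintegral_expR_quad // big_ord_recl /c' mulrAC mulrA.
Qed.

End gaussian_expquad.

Section block_coef.
Context {R : realType}.
Variable N : nat.

(* [omega_expect] stores coordinate j of omega_k at index k * N + j. *)
Definition block_coef (k : nat) (v : 'I_N -> R) (m : nat) : R :=
  if (m %/ N == k)%N then oapp v 0 (insub (m %% N)%N) else 0.

Lemma block_coef_block (k' k : nat) (v : 'I_N -> R) (j : 'I_N) :
  block_coef k v (k' * N + j) = if k' == k then v j else 0.
Proof.
have j_ltN : (j < N)%N := ltn_ord j.
rewrite /block_coef divnMDl ?(leq_ltn_trans _ j_ltN) // divn_small // addn0.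
by rewrite modnMDl modn_small // valK.
Qed.

Lemma big_block_coef (T : Type) (idx : T) (op : Monoid.com_law idx) (r : nat)
    (k : 'I_r) (v w : 'I_N -> R) (H : R -> R -> nat -> T) :
  (forall m, H 0 0 m = idx) ->
  \big[op/idx]_(m < r * N) H (block_coef k v m) (block_coef k w m) m =
  \big[op/idx]_(j < N) H (v j) (w j) (k * N + j)%N.
Proof.
move=> H00.
rewrite (@big_ord_muln _ _ op r N (fun m => H (block_coef k v m) (block_coef k w m) m))
  (bigD1 k) //= [X in op _ X]big1 => [|k' k'_neq_k]; last first.
  by apply: big1 => j _; rewrite !block_coef_block !ifN.
by rewrite Monoid.mulm1; apply: eq_bigr => j _; rewrite !block_coef_block eqxx.
Qed.

End block_coef.

Section favorpp.
Context {R : realType}.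
Variables (N r : nat) (s : R).
Hypothesis s01 : 0 < s < 1.

Let omega_of (g : nat -> R) (k : 'I_r) (j : 'I_N) : R := g (k * N + j)%N.

Definition favor_quad (k : nat) : nat -> R :=
  block_coef N k (fun _ => - (2 * Ahat s)).

Definition favor_lin (k : nat) (u : 'I_N -> R) : nat -> R :=
  block_coef N k (fun j => Bpp s * u j).

Lemma Ahat_gt0 : 0 < Ahat s.
Proof. by case/andP: s01 => s_gt0 s_lt1; rewrite /Ahat subr_gt0 div1r invf_gt1. Qed.

Lemma Dpp_sqr : Dpp N s ^+ 2 = Num.sqrt (1 + 4 * Ahat s) ^+ N.
Proof.
have q_ge0 : 0 <= 1 + 4 * Ahat s by have := Ahat_gt0; lra.
rewrite /Dpp -powR12_sqrt // -!powR_mulrn ?powR_ge0 // -!powRrM.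
by congr powR; rewrite mulr_natr; field.
Qed.

Lemma favor_quad_le0 k m : favor_quad k m <= 0.
Proof.
rewrite /favor_quad /block_coef; case: ifP => // _; case: insub => //= _.
by rewrite oppr_le0 mulr_ge0 // ltW // Ahat_gt0.
Qed.

Lemma sqnormD (x y : 'I_N -> R) :
  sqnorm (fun j => x j + y j) = sqnorm x + 2 * dotv x y + sqnorm y.
Proof.
rewrite /sqnorm /dotv mulr_sumr -!big_split; apply: eq_bigr => j _ /=; ring.
Qed.

Lemma phiFpp_mulE (g : nat -> R) (k : 'I_r) (x y : 'I_N -> R) :
  phiFpp s (omega_of g) x k * phiFpp s (omega_of g) y k =
  (Dpp N s / Num.sqrt r%:R) ^+ 2 * expR (Cpp * (sqnorm x + sqnorm y)) *
  expR (\sum_(m < r * N) (favor_quad k m * g m ^+ 2 +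
                          favor_lin k (fun j => x j + y j) m * g m)).
Proof.
rewrite (@big_block_coef _ _ _ _ +%R r k _ _ (fun a b m => a * g m ^+ 2 + b * g m));
  last by move=> m; rewrite !mul0r addr0.
rewrite /phiFpp mulrACA -expr2 -mulrA -!expRD; congr (_ * expR _).
rewrite /sqnorm /dotv /omega_of mulrDr !mulr_sumr -!big_split /=.
by apply: eq_bigr => j _; rewrite /Cpp; ring.
Qed.

Lemma prod_expquad_mean_favor (k : 'I_r) (u : 'I_N -> R) :
  \prod_(m < r * N) expquad_mean (favor_quad k m) (favor_lin k u m) =
  expR (sqnorm u / 2) / Dpp N s ^+ 2.
Proof.
have q_gt0 : 0 < 1 + 4 * Ahat s by have := Ahat_gt0; lra.
rewrite (@big_block_coef _ _ _ _ *%R r k _ _ (fun a b _ => expquad_mean a b));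
  last by move=> m; exact: expquad_mean00.
transitivity (\prod_(j < N) (expR (u j * u j / 2) / Num.sqrt (1 + 4 * Ahat s))).
  apply: eq_bigr => j _; rewrite /expquad_mean.
  have -> : 1 - 2 * - (2 * Ahat s) = 1 + 4 * Ahat s by ring.
  congr (expR _ / _); rewrite exprMn /Bpp sqr_sqrtr ?ltW //; field; lra.
by rewrite prodf_div prodr_const card_ord -expR_sum /sqnorm /dotv mulr_suml Dpp_sqr.
Qed.

Lemma omega_expect_sum_phiFpp (I : finType) (c : I -> R) (k : I -> 'I_r)
    (x y : I -> 'I_N -> R) :
  (0 < r)%N ->
  omega_expect (fun omega : 'I_r -> 'I_N -> R =>
    \sum_t c t * (phiFpp s omega (x t) (k t) * phiFpp s omega (y t) (k t))) =
  \sum_t c t * expR (dotv (x t) (y t)) / r%:R.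
Proof.
move=> r_gt0; rewrite /omega_expect.
under [X in gauss_expect _ X]funext => g.
  under eq_bigr do rewrite (phiFpp_mulE g) mulrA.
  over.
rewrite (gauss_expect_sum_expR_quad _ _ _ (fun t => favor_quad (k t))
  (fun t => favor_lin (k t) (fun j => x t j + y t j))) => [|t m]; last first.
  exact: favor_quad_le0.
apply: eq_bigr => t _; rewrite prod_expquad_mean_favor sqnormD.
have Dpp_neq0 : Dpp N s != 0.
  by rewrite /Dpp gt_eqF // powR_gt0 //; have := Ahat_gt0; lra.
have r_neq0 : r%:R != 0 :> R by rewrite pnatr_eq0 -lt0n.
rewrite exprMn exprVn sqr_sqrtr ?ler0n //.
transitivity (c t * (Dpp N s ^+ 2 / Dpp N s ^+ 2) / r%:R *
    (expR (Cpp * (sqnorm (x t) + sqnorm (y t))) *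
     expR ((sqnorm (x t) + 2 * dotv (x t) (y t) + sqnorm (y t)) / 2))).
  by field; rewrite r_neq0.
rewrite divff ?expf_neq0 // mulr1 -expRD mulrAC.
by congr (_ * expR _ / _); rewrite /Cpp; field.
Qed.

Lemma E_rand_subE (M : nat) (mem : 'I_M -> 'I_N -> R) (z1 z2 : 'I_N -> R)
    (omega : 'I_r -> 'I_N -> R) :
  E_rand s omega mem z1 - E_rand s omega mem z2 =
  \sum_(t : bool * 'I_r * 'I_M) (if t.1.1 then -1 else 1) *
    (phiFpp s omega (if t.1.1 then z1 else z2) t.1.2 * phiFpp s omega (mem t.2) t.1.2).
Proof.
rewrite !big_pairE big_bool /= /E_rand -sumrN.
congr (_ + _); apply: eq_bigr => k _.
  by rewrite mulrN mulr_sumr -sumrN; apply: eq_bigr => mu _; rewrite mulN1r.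
by rewrite mulrN opprK mulr_sumr; apply: eq_bigr => mu _; rewrite mul1r.
Qed.

Lemma omega_expect_E_rand_sub (M : nat) (mem : 'I_M -> 'I_N -> R)
    (z1 z2 : 'I_N -> R) :
  (0 < r)%N ->
  omega_expect (fun omega : 'I_r -> 'I_N -> R =>
    E_rand s omega mem z1 - E_rand s omega mem z2) =
  \sum_(mu < M) (expR (dotv z2 (mem mu)) - expR (dotv z1 (mem mu))).
Proof.
move=> r_gt0; under [X in omega_expect X]funext do rewrite E_rand_subE.
rewrite omega_expect_sum_phiFpp // !big_pairE big_bool /= -big_split /=.
set S := (X in _ = X).
rewrite (eq_bigr (fun=> S / r%:R)) => [|k _].
  by rewrite sumr_const card_ord -[_ *+ r]mulr_natr divfK // pnatr_eq0 -lt0n.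
by rewrite mulr_suml -big_split; apply: eq_bigr => mu _ /=; ring.
Qed.

End favorpp.

Section spins.
Context {R : realType} {N : nat}.
Implicit Types x y z : 'I_N -> R.

Lemma hammingC x y : hamming x y = hamming y x.
Proof. by apply: eq_card => j; rewrite !inE eq_sym. Qed.

Lemma hamming_triangle x y z : (hamming x z <= hamming x y + hamming y z)%N.
Proof.
apply: leq_trans (leq_card_setU _ _).1; apply: subset_leq_card.
by apply/fintype.subsetP => j; rewrite !inE; case: (x j =P y j) => [->|] //.
Qed.

Lemma spin_mul x y i : is_spin x -> is_spin y -> x i * y i = 1 \/ x i * y i = -1.
Proof. by move=> /(_ i) x_i /(_ i) y_i; case: x_i => ->; case: y_i => ->; lra. Qed.

Lemma dotv_spin x y : is_spin x -> is_spin y ->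
  dotv x y = N%:R - 2 * (hamming x y)%:R.
Proof.
move=> x_spin y_spin.
rewrite /dotv /hamming -sum1_card natr_sum [in RHS]big_mkcond /=.
rewrite mulr_sumr -[N in N%:R]card_ord -sumr_const -sumrB.
have one_neqN1 : ((1 : R) == -1) = false by apply/eqP; lra.
have N1_neq1 : ((-1 : R) == 1) = false by apply/eqP; lra.
apply: eq_bigr => j _; rewrite inE.
by case: (x_spin j) (y_spin j) => -> [] ->; rewrite ?eqxx ?one_neqN1 ?N1_neq1 /=; lra.
Qed.

Lemma dotv_flip x y i : dotv (flip x i) y = dotv x y - 2 * (x i * y i).
Proof.
rewrite /dotv (bigD1 i) // [in RHS](bigD1 i) //= /flip eqxx.
rewrite (eq_bigr (fun j => x j * y j)) => [|j /negbTE -> //]; ring.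
Qed.

Lemma dotv_spin_ge x y (rho : R) : is_spin x -> is_spin y ->
  (hamming x y)%:R <= rho * N%:R -> N%:R - 2 * rho * N%:R <= dotv x y.
Proof. by move=> x_spin y_spin; rewrite dotv_spin //; lra. Qed.

Lemma dotv_spin_le x y z (tau rho : R) : is_spin x -> is_spin z ->
  (hamming x y)%:R <= rho * N%:R -> tau * N%:R <= (hamming y z)%:R ->
  dotv x z <= N%:R - 2 * (tau - rho) * N%:R.
Proof.
move=> x_spin z_spin xy_near yz_far; rewrite dotv_spin //.
have := hamming_triangle y x z; rewrite -(ler_nat R) natrD (hammingC y x); lra.
Qed.

End spins.

Section energy_gap.
Context {R : realType}.

Lemma flip_gain_ge (d sigma : R) : sigma = 1 \/ sigma = -1 ->
  expR d * (1 - expR (-2)) <= sigma * (expR d - expR (d - 2 * sigma)).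
Proof.
have e2_ge : 3 <= expR 2 :> R by have := expR_ge1Dx (2 : R); lra.
have em2_gt0 : 0 < expR (-2) :> R := expR_gt0 _.
have ed_gt0 := expR_gt0 d.
by case=> ->; rewrite ?mul1r ?mulr1 ?mulN1r ?mulrN1 ?opprK expRD; nra.
Qed.

Lemma flip_gain_norm (d sigma : R) : sigma = 1 \/ sigma = -1 ->
  `|expR d - expR (d - 2 * sigma)| <= expR d * (expR 2 - 1).
Proof.
have e2_ge : 3 <= expR 2 :> R by have := expR_ge1Dx (2 : R); lra.
have em2_gt0 : 0 < expR (-2) :> R := expR_gt0 _.
have em2_le : expR (-2) <= 1 :> R by rewrite expR_le1; lra.
have ed_gt0 := expR_gt0 d.
by case=> ->; rewrite ?mulr1 ?mulrN1 ?opprK expRD ler_norml; apply/andP; split; nra.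
Qed.

Lemma sum_dominant (I : finType) (l : I) (F : I -> R) (sigma alpha beta : R) :
  `|sigma| <= 1 -> alpha <= sigma * F l -> (forall i, i != l -> `|F i| <= beta) ->
  (#|I|.-1)%:R * beta < alpha -> 0 < sigma * \sum_i F i.
Proof.
move=> sigma_le1 alpha_le F_le beta_lt.
have rest_le : `|sigma * \sum_(i | i != l) F i| <= (#|I|.-1)%:R * beta.
  rewrite normrM; apply: le_trans (ler_piMl _ sigma_le1) _ => //.
  rewrite -(cardC1 l) mulr_natl -sumr_const.
  by apply: le_trans (ler_norm_sum _ _ _) _; apply: ler_sum => i; exact: F_le.
move: rest_le; rewrite ler_norml => /andP[rest_ge _].
rewrite (bigD1 l) //= mulrDr; lra.
Qed.

Lemma capacity_margin (n tau rho M : R) : 1 <= M ->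
  M <= expR (2 * n * (tau - 2 * rho)) * ((1 - expR (-2)) / (2 * expR 2)) ->
  (M - 1) * (expR (n - 2 * (tau - rho) * n) * (expR 2 - 1)) <
  expR (n - 2 * rho * n) * (1 - expR (-2)).
Proof.
move=> M_ge1; rewrite [leRHS]mulrA ler_pdivlMr ?mulr_gt0 ?expR_gt0 // => M_le.
have -> : expR (n - 2 * rho * n) =
    expR (n - 2 * (tau - rho) * n) * expR (2 * n * (tau - 2 * rho)).
  by rewrite -expRD; congr expR; ring.
have e2_gt0 : 0 < expR 2 :> R := expR_gt0 2.
have P_gt0 : 0 < expR (n - 2 * (tau - rho) * n) := expR_gt0 _.
rewrite mulrCA -[ltRHS]mulrA ltr_pM2l //; nra.
Qed.

End energy_gap.

Theorem theorem1 (R : realType) (N M r : nat) (s tau rho : R)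
  (mem : 'I_M -> 'I_N -> R) :
  (0 < N)%N -> (0 < M)%N -> (0 < r)%N ->
  0 < s < 1 ->
  (forall mu, is_spin (mem mu)) ->
  0 < tau ->
  (forall mu nu : 'I_M, mu != nu -> tau * N%:R <= (hamming (mem mu) (mem nu))%:R) ->
  0 < rho -> rho < tau / 2 ->
  M%:R <= expR (2 * N%:R * (tau - 2 * rho)) * ((1 - expR (-2)) / (2 * expR 2)) ->
  forall (l : 'I_M) (xihat : 'I_N -> R) (i : 'I_N),
    is_spin xihat ->
    (hamming xihat (mem l))%:R <= rho * N%:R ->
    let Delta := fun omega : 'I_r -> 'I_N -> R =>
      E_rand s omega mem (flip xihat i) - E_rand s omega mem xihat in
    (xihat i = mem l i -> 0 < omega_expect Delta) /\
    (xihat i = - mem l i -> omega_expect Delta < 0).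
Proof.
move=> _ M_gt0 r_gt0 s01 mem_spin _ mem_sep _ _ M_le l xihat i xihat_spin xihat_near
  Delta.
have mem_li_sq : mem l i * mem l i = 1 by case: (mem_spin l i) => ->; lra.
suff gap : 0 < xihat i * mem l i * omega_expect Delta.
  by split=> xihat_i; move: gap; rewrite xihat_i ?mulNr mem_li_sq; lra.
have e_ge : (0 : R) <= 1 - expR (-2) /\ (0 : R) <= expR 2 - 1.
  by rewrite !subr_ge0 expR_le1; have := expR_ge1Dx (2 : R); split; lra.
rewrite /Delta omega_expect_E_rand_sub //; under eq_bigr do rewrite dotv_flip.
apply: (sum_dominant _ l _ _ (expR (N%:R - 2 * rho * N%:R) * (1 - expR (-2)))
  (expR (N%:R - 2 * (tau - rho) * N%:R) * (expR 2 - 1))).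
- by case: (spin_mul _ _ i xihat_spin (mem_spin l)) => ->; rewrite ?normrN normr1.
- apply: le_trans _ (flip_gain_ge _ _ (spin_mul _ _ i xihat_spin (mem_spin l))).
  by rewrite ler_wpM2r ?ler_expR ?e_ge.1 ?dotv_spin_ge.
- move=> mu mu_neq_l.
  apply: le_trans (flip_gain_norm _ _ (spin_mul _ _ i xihat_spin (mem_spin mu))) _.
  rewrite ler_wpM2r ?ler_expR ?e_ge.2 //.
  by apply: dotv_spin_le xihat_near (mem_sep _ _ _); rewrite // eq_sym.
- by rewrite card_ord -subn1 natrB ?capacity_margin ?ler1n.
Qed.
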